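(* Let $n\ge1$, $K=\mathbb{R}^n_+$, and $\bar x\in K\cap\mathbb{Z}^n\setminus\{0\}$. Then $$Q(\bar x)=\Big\{x\in\mathbb{R}^n:\ x_i\ge0\ (i=1,\dots,n),\ \ \sum_{i=1}^k d^k_i x_i\ge\sum_{i=1}^k d^k_i\bar x_i\ (k=1,\dots,n)\Big\}.$$
   Context: Lexicographic order: for $x,y\in\mathbb{R}^n$, $x\prec y$ iff $x\ne y$ and $x_i<y_i$ for the smallest index $i$ with $x_i\ne y_i$; $\succeq$ has the obvious meaning. $Q(\bar x):=\operatorname{conv}\{x\in K\cap\mathbb{Z}^n: x\succeq\bar x\}$. For $k\in\{1,\dots,n\}$ and $i\in\{1,\dots,k\}$: $d^k_k=1$; $d^k_{k-1}=\bar x_k$ (if $k\ge2$); and $d^k_i=\bar x_k\prod_{j=i+1}^{k-1}(\bar x_j+1)$ for $i\le k-2$. The inequality $\sum_{i=1}^k d^k_i x_i\ge\sum_{i=1}^k d^k_i\bar x_i$ is called the $k$-th lex-cut associated with $\bar x$. *)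

From HB Require Import structures.
From mathcomp Require Import all_boot all_order all_algebra.
From mathcomp Require Import reals.
Set Implicit Arguments. Unset Strict Implicit. Unset Printing Implicit Defensive.
Import Order.TTheory GRing.Theory Num.Theory.
Local Open Scope ring_scope.

(* Points of R^n are functions 'I_n -> R; coordinate i (0-based) is the
   paper's coordinate i+1. *)

Definition conv_hull (R : realType) (n : nat) (S : ('I_n -> R) -> Prop)
  (x : 'I_n -> R) : Prop :=
  exists (m : nat) (lam : 'I_m -> R) (p : 'I_m -> 'I_n -> R),
    (forall t, 0 <= lam t) /\ \sum_(t < m) lam t = 1 /\
    (forall t, S (p t)) /\ (forall i, x i = \sum_(t < m) lam t * p t i).

Definition lex_lt (R : realType) (n : nat) (x y : 'I_n -> R) : Prop :=
  exists i : 'I_n, (forall j : 'I_n, (j < i)%N -> x j = y j) /\ x i < y i.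

Definition lex_ge (R : realType) (n : nat) (x y : 'I_n -> R) : Prop :=
  x = y \/ lex_lt y x.

Definition nonneg_int_pt (R : realType) (n : nat) (x : 'I_n -> R) : Prop :=
  forall i, 0 <= x i /\ x i \is a Num.int.

Definition Qset (R : realType) (n : nat) (xbar : 'I_n -> R) : ('I_n -> R) -> Prop :=
  conv_hull (fun x => nonneg_int_pt x /\ lex_ge x xbar).

(* Lex-cut coefficients, 0-based: lexd xbar k i is the paper's d^{k+1}_{i+1}
   (only used for i <= k):
     d^k_k = 1, d^k_{k-1} = xbar_k,
     d^k_i = xbar_k * prod_{j=i+1}^{k-1} (xbar_j + 1) for i <= k-2. *)
Definition lexd (R : realType) (n : nat) (xbar : 'I_n -> R) (k i : 'I_n) : R :=
  if (i == k :> nat) then 1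
  else if (i.+1 == k :> nat) then xbar k
  else xbar k * \prod_(j < n | (i < j)%N && (j < k)%N) (xbar j + 1).

Definition lex_cut (R : realType) (n : nat) (xbar : 'I_n -> R) (k : 'I_n)
  (x : 'I_n -> R) : Prop :=
  \sum_(i < n | (i <= k)%N) lexd xbar k i * x i
    >= \sum_(i < n | (i <= k)%N) lexd xbar k i * xbar i.

From HB Require Import structures.
From mathcomp Require Import all_boot all_order all_algebra.
From mathcomp Require Import reals ring lra zify.
Import Order.TTheory GRing.Theory Num.Theory.
Local Open Scope ring_scope.
Set Implicit Arguments. Unset Strict Implicit. Unset Printing Implicit Defensive.

(* Validity: an integer point y >= 0 with y ≻ xbar first exceeds xbar at some
   index p, where y_p >= xbar_p + 1.  Telescoping the products defining d^k_i
   gives d^k_p = sum_{p<i<=k} d^k_i xbar_i, so the excess at p pays for the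
   whole tail of the k-th cut.
   Sufficiency, by induction on the length p of the common prefix of x and
   xbar: the p-th cut gives x_p >= xbar_p.  If x_p >= xbar_p + 1, rounding the
   coordinates of x one at a time writes x as a convex combination of integer
   points that agree with xbar before p and exceed it at p.  Otherwise
   t = x_p - xbar_p < 1 and x = t (xbar_<p, xbar_p + 1, 0, ..., 0) + (1 - t) z,
   where z agrees with xbar up to p and z_>p = x_>p / (1 - t); the same
   identity shows that z satisfies the later cuts. *)

Section ConvexHull.
Variables (R : realType) (n : nat).
Implicit Types (S P : ('I_n -> R) -> Prop) (x y : 'I_n -> R).

Lemma conv_hull_mem S y : S y -> conv_hull S y.
Proof.
move=> Sy; exists 1%N, (fun _ => 1), (fun _ => y).
by split; [|split; [rewrite big_ord1|split=> // i; rewrite big_ord1 mul1r]].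
Qed.

Lemma conv_hull_eq S x y : conv_hull S y -> x =1 y -> conv_hull S x.
Proof.
move=> [m [lam [p [lam_ge0 [lam_sum [pS y_def]]]]]] xy.
by exists m, lam, p; do 3!split=> //; move=> i; rewrite xy y_def.
Qed.

Lemma conv_hull_convex S x a b (t : R) :
  0 <= t <= 1 -> conv_hull S a -> conv_hull S b ->
  x =1 (fun i => t * a i + (1 - t) * b i) -> conv_hull S x.
Proof.
move=> /andP[t_ge0 t_le1] [ma [la [pa [la_ge0 [la_sum [paS a_def]]]]]]
  [mb [lb [pb [lb_ge0 [lb_sum [pbS b_def]]]]]] x_def.
pose lam t' := match split t' with inl j => t * la j | inr j => (1 - t) * lb j end.
pose p t' := match split t' with inl j => pa j | inr j => pb j end.
have sum_split (F : 'I_ma -> R) (G : 'I_mb -> R) :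
    \sum_(t' < ma + mb) match split t' with inl j => F j | inr j => G j end =
    \sum_(j < ma) F j + \sum_(j < mb) G j.
  rewrite big_split_ord /=; congr (_ + _); apply: eq_bigr => j _.
    by rewrite (unsplitK (inl _ j)).
  by rewrite (unsplitK (inr _ j)).
exists (ma + mb)%N, lam, p; split; [|split; [|split]].
- by move=> t'; rewrite /lam; case: split => j; rewrite mulr_ge0 ?subr_ge0.
- by rewrite sum_split -!mulr_sumr la_sum lb_sum; ring.
- by move=> t'; rewrite /p; case: split.
- move=> i; rewrite x_def a_def b_def !mulr_sumr -sum_split.
  by apply: eq_bigr => t' _; rewrite /lam /p; case: split => j; rewrite mulrA.
Qed.

Lemma conv_hull_sum_ge S (I : pred 'I_n) (c : 'I_n -> R) (b : R) x :
  (forall y, S y -> b <= \sum_(i | I i) c i * y i) ->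
  conv_hull S x -> b <= \sum_(i | I i) c i * x i.
Proof.
move=> Sb [m [lam [p [lam_ge0 [lam_sum [pS x_def]]]]]].
have -> : b = \sum_(t < m) lam t * b by rewrite -mulr_suml lam_sum mul1r.
have -> : \sum_(i | I i) c i * x i =
    \sum_(t < m) lam t * \sum_(i | I i) c i * p t i.
  under eq_bigr => i _ do rewrite x_def mulr_sumr.
  rewrite exchange_big /=; apply: eq_bigr => t _; rewrite mulr_sumr.
  by apply: eq_bigr => i _; ring.
by apply: ler_sum => t _; apply: ler_wpM2l => //; apply: Sb.
Qed.

(* y is the convex combination of its two roundings at a non-integral
   coordinate q, with the fractional part of y_q as weight; each rounding has
   one non-integral coordinate less. *)
Lemma conv_hull_rounding S P :
  (forall y, P y -> (forall i, y i \is a Num.int) -> S y) ->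
  (forall y q, P y -> y q \isn't a Num.int ->
     P [eta y with q |-> (Num.floor (y q))%:~R] /\
     P [eta y with q |-> (Num.floor (y q) + 1)%:~R]) ->
  forall y, P y -> conv_hull S y.
Proof.
move=> int_S round_P.
suff: forall q, (q <= n)%N -> forall y, P y ->
    (forall i : 'I_n, (q <= i)%N -> y i \is a Num.int) -> conv_hull S y.
  by move=> H y Py; apply: (H n) => // i; rewrite leqNgt ltn_ord.
elim=> [_ y Py y_int | q IH q_lt y Py y_int].
  by apply/conv_hull_mem/int_S => // i; apply: y_int.
pose oq := Ordinal q_lt.
have IHq z : P z -> z oq \is a Num.int ->
    (forall i : 'I_n, (q < i)%N -> z i = y i) -> conv_hull S z.
  move=> Pz zq_int z_y; apply: IH (ltnW q_lt) _ Pz _ => i.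
  rewrite leq_eqVlt => /orP[/eqP qi|qi]; last by rewrite z_y ?y_int.
  by have -> : i = oq by apply: val_inj.
have [yq_int|yq_nint] := boolP (y oq \is a Num.int); first exact: IHq.
have IHupd (v : int) : P [eta y with oq |-> v%:~R] -> conv_hull S [eta y with oq |-> v%:~R].
  move=> Pv; apply: IHq Pv _ _ => [|i qi] /=; first by rewrite eqxx intr_int.
  by case: eqP => // e; move: qi; rewrite e ltnn.
have [P_lo P_hi] := round_P y oq Py yq_nint.
pose f := Num.floor (y oq).
apply: (conv_hull_convex (t := y oq - f%:~R)
  (a := [eta y with oq |-> (f + 1)%:~R]) (b := [eta y with oq |-> f%:~R])).
- have := floor_itv (y oq); rewrite -/f rmorphD /= => /andP[? ?].
  by rewrite subr_ge0 lerBlDl; apply/andP; split; [|lra].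
- exact: IHupd.
- exact: IHupd.
- by move=> i /=; case: eqP => [->|_]; rewrite ?rmorphD /=; ring.
Qed.

End ConvexHull.

Lemma int_lt_le_add1 (R : archiNumDomainType) (a b : R) :
  a \is a Num.int -> b \is a Num.int -> a < b -> a + 1 <= b.
Proof.
move=> /intrP[i ->] /intrP[j ->]; rewrite ltr_int -(rmorphD _ i 1) ler_int.
by lia.
Qed.

Section LexCuts.
Variables (R : realType) (n : nat) (xbar : 'I_n -> R).
Hypothesis xbar_ge0 : forall i, 0 <= xbar i.
Implicit Types (x y : 'I_n -> R).

Definition lex_tail (k p : 'I_n) (y : 'I_n -> R) : R :=
  \sum_(i < n | (p < i)%N && (i <= k)%N) lexd xbar k i * y i.

Lemma lexd_diag (k : 'I_n) : lexd xbar k k = 1.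
Proof. by rewrite /lexd eqxx. Qed.

Lemma lexd_lt (k i : 'I_n) : (i < k)%N ->
  lexd xbar k i = xbar k * \prod_(j < n | (i < j)%N && (j < k)%N) (xbar j + 1).
Proof.
move=> ik; rewrite /lexd (ltn_eqF ik); case: eqP => [e|//].
by rewrite big_pred0 ?mulr1 // => j; apply/negbTE; lia.
Qed.

Lemma lexd_ge0 (k i : 'I_n) : 0 <= lexd xbar k i.
Proof.
rewrite /lexd; case: eqP => // _; case: eqP => // _.
by rewrite mulr_ge0 // prodr_ge0 // => j _; rewrite addr_ge0.
Qed.

Lemma lex_tail_ge0 (k p : 'I_n) y : (forall i, 0 <= y i) -> 0 <= lex_tail k p y.
Proof. by move=> y_ge0; rewrite sumr_ge0 // => i _; rewrite mulr_ge0 ?lexd_ge0. Qed.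

(* Induction on k - p: d^k_p = (xbar_{p+1} + 1) d^k_{p+1} for p + 1 < k. *)
Lemma lexd_lex_tail (k p : 'I_n) : (p < k)%N -> lexd xbar k p = lex_tail k p xbar.
Proof.
move Em : (k - p.+1)%N => m; elim: m p Em => [|m IH] p Em pk.
  have k_eq : k = p.+1 :> nat by lia.
  rewrite /lex_tail (big_pred1 k) => [|i]; last first.
    by rewrite /= -val_eqE /=; lia.
  by rewrite lexd_diag mul1r /lexd (ltn_eqF pk) k_eq eqxx.
have p1_lt : (p.+1 < n)%N by apply: leq_trans (ltn_ord k); lia.
pose p1 := Ordinal p1_lt.
have p1k : (p1 < k)%N by rewrite /=; lia.
have tail_p1 (idx : R) (op : Monoid.com_law idx) (F : 'I_n -> R) (Q : nat -> bool) :
    Q p1 -> \big[op/idx]_(i < n | (p < i)%N && Q i) F i =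
    op (F p1) (\big[op/idx]_(i < n | (p1 < i)%N && Q i) F i).
  move=> Qp1; rewrite (bigD1 p1) /= ?ltnSn ?Qp1 //; congr (op _ _).
  apply: eq_bigl => i; rewrite -val_eqE /=.
  by case: (Q i); rewrite ?andbT ?andbF //; lia.
rewrite /lex_tail (tail_p1 _ _ _ (leq^~ k)) ?(ltnW p1k) // -/(lex_tail k p1 xbar).
rewrite -IH //; last by rewrite /=; lia.
by rewrite (lexd_lt pk) (lexd_lt p1k) (tail_p1 _ _ _ (ltn^~ k)) //=; ring.
Qed.

Lemma lex_cut_subr (k : 'I_n) x : lex_cut xbar k x <->
  0 <= \sum_(i < n | (i <= k)%N) lexd xbar k i * (x i - xbar i).
Proof.
under eq_bigr => i _ do rewrite mulrBr.
by rewrite sumrB subr_ge0.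
Qed.

Lemma sum_lexd_split (k p : 'I_n) x : (p <= k)%N ->
  (forall j : 'I_n, (j < p)%N -> x j = xbar j) ->
  \sum_(i < n | (i <= k)%N) lexd xbar k i * (x i - xbar i) =
  lexd xbar k p * (x p - xbar p) + (lex_tail k p x - lex_tail k p xbar).
Proof.
move=> pk x_pre; rewrite /lex_tail -sumrB.
under [in RHS]eq_bigr => i _ do rewrite -mulrBr.
rewrite (bigID (fun i : 'I_n => (p <= i)%N)) /= [X in _ + X]big1 ?addr0; last first.
  by move=> i /andP[_]; rewrite -ltnNge => /x_pre ->; rewrite subrr mulr0.
rewrite (bigD1 p) /= ?pk ?leqnn //; congr (_ + _).
by apply: eq_bigl => i; rewrite -val_eqE /=; lia.
Qed.

Lemma lex_cut_diag (p : 'I_n) x : (forall j : 'I_n, (j < p)%N -> x j = xbar j) ->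
  lex_cut xbar p x <-> xbar p <= x p.
Proof.
move=> x_pre; rewrite lex_cut_subr (sum_lexd_split (p := p)) // /lex_tail.
rewrite !big_pred0 => [|i|i]; try lia.
by rewrite lexd_diag subrr addr0 mul1r subr_ge0.
Qed.

Lemma lex_cut_tail (k p : 'I_n) x : (p < k)%N ->
  (forall j : 'I_n, (j < p)%N -> x j = xbar j) ->
  lex_cut xbar k x <-> (1 - (x p - xbar p)) * lex_tail k p xbar <= lex_tail k p x.
Proof.
move=> pk x_pre; rewrite lex_cut_subr (sum_lexd_split (p := p)) ?(ltnW pk) // lexd_lex_tail //.
set T := lex_tail _ _ xbar; set X := lex_tail _ _ x.
have -> : T * (x p - xbar p) + (X - T) = X - (1 - (x p - xbar p)) * T by ring.
by rewrite subr_ge0.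
Qed.

Lemma lex_cut_prefix (k : 'I_n) x : (forall i : 'I_n, (i <= k)%N -> x i = xbar i) ->
  lex_cut xbar k x.
Proof.
by move=> x_pre; rewrite /lex_cut le_eqVlt; apply/orP; left; apply/eqP/eq_bigr => i /x_pre ->.
Qed.

Lemma lex_cut_lex_gap (p : 'I_n) y : (forall i, 0 <= y i) ->
  (forall j : 'I_n, (j < p)%N -> y j = xbar j) -> xbar p + 1 <= y p ->
  forall k, lex_cut xbar k y.
Proof.
move=> y_ge0 y_pre y_gap k; case: (ltngtP k p) => [kp|pk|/val_inj ->].
- by apply: lex_cut_prefix => i ik; apply: y_pre; apply: leq_ltn_trans kp.
- rewrite (lex_cut_tail (p := p)) //; apply: (@le_trans _ _ 0); last exact: lex_tail_ge0.
  by rewrite mulr_le0_ge0 ?lex_tail_ge0 //; lra.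
- by rewrite lex_cut_diag //; lra.
Qed.

End LexCuts.

Section Qset.
Variables (R : realType) (n : nat) (xbar : 'I_n -> R).
Hypothesis xbar_nat : nonneg_int_pt xbar.
Let xbar_ge0 i : 0 <= xbar i. Proof. by case: (xbar_nat i). Qed.
Implicit Types (x y : 'I_n -> R).

Lemma lex_cut_lex_ge y : nonneg_int_pt y -> lex_ge y xbar -> forall k, lex_cut xbar k y.
Proof.
move=> y_nat [-> k|[p [y_pre lt_p]]]; first exact: lex_cut_prefix.
apply: (lex_cut_lex_gap xbar_ge0 _ (fun j jp => esym (y_pre j jp))) => [i|].
  by case: (y_nat i).
by apply: int_lt_le_add1 lt_p; [case: (xbar_nat p)|case: (y_nat p)].
Qed.

Lemma Qset_ge0 x : Qset xbar x -> forall i, 0 <= x i.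
Proof.
move=> Qx i; suff: 0 <= \sum_(j | j == i) 1 * x j by rewrite big_pred1_eq mul1r.
apply: conv_hull_sum_ge Qx => y [y_nat _].
by rewrite big_pred1_eq mul1r; case: (y_nat i).
Qed.

Lemma lex_cut_Qset x k : Qset xbar x -> lex_cut xbar k x.
Proof.
by apply: conv_hull_sum_ge => y [y_nat y_lex]; apply: lex_cut_lex_ge.
Qed.

Lemma Qset_lex_gap (p : 'I_n) x : (forall i, 0 <= x i) ->
  (forall j : 'I_n, (j < p)%N -> x j = xbar j) -> xbar p + 1 <= x p -> Qset xbar x.
Proof.
pose P y := [/\ forall i, 0 <= y i, forall j : 'I_n, (j < p)%N -> y j = xbar j
                & xbar p + 1 <= y p].
move=> x_ge0 x_pre x_gap; apply: (@conv_hull_rounding _ _ _ P); last by split.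
  move=> y [y_ge0 y_pre y_gap] y_int; split=> [i|]; first by split.
  by right; exists p; split=> [j /y_pre ->|]; lra.
move=> y q [y_ge0 y_pre y_gap] yq_nint.
have q_ge : (p <= q)%N.
  rewrite leqNgt; apply/negP => /y_pre yq; move: yq_nint; rewrite yq.
  by case: (xbar_nat q) => _ ->.
have round_P v : (Num.floor (y q))%:~R <= v -> P [eta y with q |-> v].
  move=> le_v; have fl_ge0 : 0 <= (Num.floor (y q))%:~R :> R.
    by rewrite ler0z floor_ge0.
  split=> [i|j jp|] /=.
  - by case: eqP => // _; apply: le_trans le_v.
  - by case: eqP => [e|_]; [move: jp; rewrite e ltnNge q_ge|exact: y_pre].
  case: eqP => [e|_] //; apply: le_trans le_v; rewrite -e.
  have /intrP[z xp1] : xbar p + 1 \is a Num.int.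
    by rewrite rpredD ?rpred1 //; case: (xbar_nat p).
  by rewrite xp1 ler_int floor_ge_int -xp1.
by split; apply: round_P; rewrite // ler_int; lia.
Qed.

Definition lex_bump (p : 'I_n) : 'I_n -> R :=
  fun i => if (i < p)%N then xbar i else if i == p then xbar i + 1 else 0.

Lemma lex_bump_mem (p : 'I_n) :
  nonneg_int_pt (lex_bump p) /\ lex_ge (lex_bump p) xbar.
Proof.
split=> [i|]; last by right; exists p; rewrite /lex_bump ltnn eqxx; split=> [j ->|]; lra.
rewrite /lex_bump; case: ltnP => _; first exact: xbar_nat.
case: eqP => _; last by rewrite lexx rpred0.
by case: (xbar_nat i) => ? ?; split; rewrite ?addr_ge0 ?rpredD ?rpred1.
Qed.

Lemma lex_cut_rescale (k p : 'I_n) x : (p < k)%N ->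
  (forall j : 'I_n, (j < p)%N -> x j = xbar j) -> x p - xbar p < 1 ->
  lex_cut xbar k x ->
  lex_cut xbar k (fun i => if (i <= p)%N then xbar i else x i / (1 - (x p - xbar p))).
Proof.
set t := x p - xbar p => pk x_pre t_lt1.
rewrite !(lex_cut_tail (p := p)) // => [|j jp]; last by rewrite ltnW.
rewrite leqnn subrr subr0 mul1r /lex_tail -/t.
under [X in _ -> _ <= X]eq_bigr => i /andP[pi _] do rewrite leqNgt pi /= mulrA.
by rewrite -mulr_suml ler_pdivlMr ?subr_gt0 // mulrC.
Qed.

Lemma Qset_lex_cuts_from (p : nat) x : (p <= n)%N -> (forall i, 0 <= x i) ->
  (forall j : 'I_n, (j < p)%N -> x j = xbar j) ->
  (forall k : 'I_n, (p <= k)%N -> lex_cut xbar k x) -> Qset xbar x.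
Proof.
move Em : (n - p)%N => m; elim: m p x Em => [|m IH] p x Em pn x_ge0 x_pre x_cuts.
  apply: (conv_hull_eq (y := xbar)); first by apply: conv_hull_mem; split=> //; left.
  by move=> i; apply: x_pre; have := ltn_ord i; lia.
have p_lt : (p < n)%N by lia.
pose op := Ordinal p_lt.
have xp_ge : xbar op <= x op by rewrite -lex_cut_diag //; apply: x_cuts.
have [x_gap|x_frac] := lerP (xbar op + 1) (x op); first exact: Qset_lex_gap x_gap.
set t := x op - xbar op.
have t_lt1 : t < 1 by rewrite /t; lra.
pose z (i : 'I_n) := if (i <= op)%N then xbar i else x i / (1 - t).
apply: (conv_hull_convex (t := t) (a := lex_bump op) (b := z)).
- by rewrite subr_ge0 xp_ge ltW.
- exact/conv_hull_mem/lex_bump_mem.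
- apply: (IH p.+1); [lia | lia | move=> i | move=> j jp | move=> k pk].
  + by rewrite /z; case: ifP => // _; rewrite divr_ge0 // subr_ge0 ltW.
  + by rewrite /z -ltnS jp.
  + have opk : (op < k)%N := pk.
    by apply: (lex_cut_rescale opk x_pre t_lt1); apply: x_cuts; apply: ltnW.
- move=> i; rewrite /lex_bump /z; case: (ltngtP i op) => [ip|ip|/val_inj ->].
  + by rewrite x_pre //; ring.
  + case: eqP => [e|_]; first by move: ip; rewrite e ltnn.
    by field; rewrite subr_eq0 gt_eqF.
  + by rewrite eqxx /t; ring.
Qed.

End Qset.

Theorem theorem1 (R : realType) (n : nat) (xbar : 'I_n -> R) :
  (0 < n)%N ->
  nonneg_int_pt xbar ->
  (exists i, xbar i != 0) ->
  forall x : 'I_n -> R,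
    Qset xbar x <-> ((forall i, 0 <= x i) /\ (forall k : 'I_n, lex_cut xbar k x)).
Proof.
move=> _ xbar_nat _ x; split.
  by move=> Qx; split=> [|k]; [exact: Qset_ge0 Qx | exact: lex_cut_Qset].
by move=> [x_ge0 x_cuts]; apply: (Qset_lex_cuts_from xbar_nat (p := 0)).
Qed.
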